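(* Let $\mathbf{J}\in\mathbb{R}^{n\times n}$ be a real symmetric matrix with zero diagonal, and let $\alpha,\beta>0$ be such that $\mu:=\lambda_{\min}(\mathbf{J}+\alpha\mathbf{I})>0$. Let $\{\boldsymbol{x}^{(k)}\}_{k\ge0}$ be the DOCH iterates starting from an arbitrary $\boldsymbol{x}^{(0)}\in\mathbb{R}^n$. Then the sequence $\{\boldsymbol{x}^{(k)}\}$ is bounded, and $\lim_{k\to\infty}\|\boldsymbol{x}^{(k+1)}-\boldsymbol{x}^{(k)}\|_2=0$.
   Context: Let $f(\boldsymbol{x})=\frac{\beta}{4}\sum_i x_i^4$, $g(\boldsymbol{x})=\frac12\boldsymbol{x}^\top(\mathbf{J}+\alpha\mathbf{I})\boldsymbol{x}$ and $\mathcal{H}=f-g$. The DOCH iterates are defined by $\boldsymbol{x}^{(k+1)}$ being the minimizer of $F_k(\boldsymbol{x})=f(\boldsymbol{x})-g(\boldsymbol{x}^{(k)})-\nabla g(\boldsymbol{x}^{(k)})^\top(\boldsymbol{x}-\boldsymbol{x}^{(k)})$; explicitly, $\boldsymbol{x}^{(k+1)}=\varphi(\beta^{-1}(\mathbf{J}+\alpha\mathbf{I})\boldsymbol{x}^{(k)})$ with $\varphi$ the componentwise real cube root. *)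

From HB Require Import structures.
From mathcomp Require Import all_boot all_order all_algebra.
From mathcomp Require Import all_classical all_reals all_analysis.
Set Implicit Arguments. Unset Strict Implicit. Unset Printing Implicit Defensive.
Import Order.TTheory GRing.Theory Num.Theory.
Local Open Scope ring_scope.

Definition cbrt {R : realType} (t : R) : R := Num.sg t * (`|t| `^ (3%:R^-1)).

Definition norm2 {R : realType} {n : nat} (v : 'cV[R]_n) : R :=
  Num.sqrt (\sum_(i < n) (v i 0) ^+ 2).

Definition doch_step {R : realType} {n : nat} (J : 'M[R]_n) (alpha beta : R)
  (x : 'cV[R]_n) : 'cV[R]_n :=
  \col_i cbrt (beta^-1 * ((J + alpha%:M) *m x) i 0).

Definition doch {R : realType} {n : nat} (J : 'M[R]_n) (alpha beta : R)
  (x0 : 'cV[R]_n) (k : nat) : 'cV[R]_n :=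
  iter k (doch_step J alpha beta) x0.

From HB Require Import structures.
From mathcomp Require Import all_boot all_order all_algebra.
From mathcomp Require Import all_classical all_reals all_analysis.
From mathcomp Require Import ring lra.
Import Order.TTheory GRing.Theory Num.Theory.
Import numFieldNormedType.Exports.
Local Open Scope classical_set_scope.
Local Open Scope ring_scope.
Set Implicit Arguments.
Unset Strict Implicit.
Unset Printing Implicit Defensive.

(* With A = J + alpha I and y = T x the DOCH step, (A x)_i = beta y_i^3, so the
   tangent inequality of t |-> t^4 at y_i gives
     H x - H y >= (y - x)^T A (y - x) / 2 >= mu |y - x|^2 / 2,
   where mu, the minimum of the quadratic form on the unit sphere, is an
   eigenvalue of A and hence positive.  The iterates stay in a cube [-M, M]^n
   since the cube root maps [-M^3, M^3] into [-M, M]; hence H is bounded below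
   along the orbit, its decrements tend to 0, and so do the steps. *)

Lemma cbrtK (R : realType) (t : R) : cbrt t ^+ 3 = t.
Proof.
have cube_root : (`|t| `^ 3%:R^-1) ^+ 3 = `|t|.
  by rewrite -powR_mulrn ?powR_ge0 // -powRrM mulVf ?pnatr_eq0 // powRr1.
rewrite /cbrt exprMn cube_root.
by case: sgrP => [->|_|_]; ring.
Qed.

Lemma ler_norm_cbrt (R : realType) (t M : R) :
  0 <= M -> `|t| <= M ^+ 3 -> `|cbrt t| <= M.
Proof.
by move=> M_ge0 t_le; rewrite -(ler_pXn2r (n := 3)) ?nnegrE ?normr_ge0 // -normrX cbrtK.
Qed.

Lemma ler_sum_term (R : numDomainType) (I : finType) (F : I -> R) i :
  (forall j, 0 <= F j) -> F i <= \sum_j F j.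
Proof. by move=> F_ge0; rewrite (bigD1 i) //= lerDl sumr_ge0. Qed.

Lemma quadratic_ge0_linear_coef_eq0 (R : realFieldType) (a d : R) :
  (forall t, 0 <= t * a + t ^+ 2 * d) -> a = 0.
Proof.
move=> ge0; apply/eqP/negbNE/negP => a_neq0.
pose D : R := `|d| + 1.
have D_gt0 : 0 < D by rewrite ltr_pwDr ?normr_ge0.
have d_lt : d < D by rewrite (le_lt_trans (ler_norm d)) ?ltrDl.
have a2_gt0 : 0 < a ^+ 2 by rewrite exprn_even_gt0.
have at_t : - a / D * a + (- a / D) ^+ 2 * d = a ^+ 2 / D ^+ 2 * (d - D).
  by field; rewrite gt_eqF.
have := ge0 (- a / D).
rewrite at_t pmulr_rge0 ?subr_ge0 ?leNgt ?d_lt //.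
by rewrite divr_gt0 // exprn_gt0.
Qed.

Section DotProduct.
Variables (R : comPzRingType) (n : nat).
Implicit Types (u v w : 'cV[R]_n) (A : 'M[R]_n).

Definition dotc u v : R := \sum_i u i 0 * v i 0.

Definition qform A u : R := dotc u (A *m u).

Lemma dotcC u v : dotc u v = dotc v u.
Proof. by apply: eq_bigr => i _; rewrite mulrC. Qed.

Lemma dotcDl u v w : dotc (u + v) w = dotc u w + dotc v w.
Proof. by rewrite -big_split; apply: eq_bigr => i _; rewrite mxE mulrDl. Qed.

Lemma dotcDr u v w : dotc u (v + w) = dotc u v + dotc u w.
Proof. by rewrite dotcC dotcDl !(dotcC u). Qed.

Lemma dotcZl k u v : dotc (k *: u) v = k * dotc u v.
Proof. by rewrite mulr_sumr; apply: eq_bigr => i _; rewrite mxE mulrA. Qed.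

Lemma dotc0l v : dotc 0 v = 0.
Proof. by apply: big1 => i _; rewrite mxE mul0r. Qed.

Lemma dotcNl u v : dotc (- u) v = - dotc u v.
Proof. by rewrite -scaleN1r dotcZl mulN1r. Qed.

Lemma dotc_delta j u : dotc (delta_mx j 0) u = u j 0.
Proof.
rewrite /dotc (bigD1 j) //= big1 => [|i /negbTE i_neq_j].
  by rewrite mxE !eqxx mul1r addr0.
by rewrite mxE i_neq_j mul0r.
Qed.

Lemma dotc_mulmx A u v : dotc u (A *m v) = dotc (A^T *m u) v.
Proof.
rewrite /dotc; under eq_bigr do rewrite mxE mulr_sumr.
rewrite exchange_big; apply: eq_bigr => j _; rewrite mxE mulr_suml.
by apply: eq_bigr => i _; rewrite mxE; ring.
Qed.

Lemma qformZ A k u : qform A (k *: u) = k ^+ 2 * qform A u.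
Proof. by rewrite /qform -scalemxAr dotcZl dotcC dotcZl dotcC mulrA -expr2. Qed.

Lemma qformD A u h : A^T = A ->
  qform A (u + h) = qform A u + 2 * dotc h (A *m u) + qform A h.
Proof.
move=> symA; rewrite /qform mulmxDr !dotcDl !dotcDr.
by rewrite [dotc u (A *m h)]dotc_mulmx symA [dotc _ h]dotcC; ring.
Qed.

Lemma qform1 u : qform 1%:M u = dotc u u.
Proof. by rewrite /qform mul1mx. Qed.

End DotProduct.

Section RealDotProduct.
Variables (R : realDomainType) (n : nat).
Implicit Types (u : 'cV[R]_n).

Lemma dotc_ge0 u : 0 <= dotc u u.
Proof. by apply: sumr_ge0 => i _; rewrite -expr2 sqr_ge0. Qed.

Lemma dotc_eq0 u : dotc u u = 0 -> u = 0.
Proof.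
have term_ge0 i : 0 <= u i 0 * u i 0 by rewrite -expr2 sqr_ge0.
move=> /(psumr_eq0P (fun i _ => term_ge0 i)) u0; apply/matrixP => i j.
by rewrite (ord1 j) mxE; apply/eqP; rewrite -[_ == 0]orbb -mulf_eq0 u0.
Qed.

End RealDotProduct.

Lemma norm2_dotc (R : realType) n (u : 'cV[R]_n) : norm2 u = Num.sqrt (dotc u u).
Proof. by congr Num.sqrt; apply: eq_bigr => i _; rewrite expr2. Qed.

Lemma quartic_tangent (R : realDomainType) (a b : R) :
  4%:R * b ^+ 3 * (a - b) <= a ^+ 4 - b ^+ 4.
Proof.
rewrite -subr_ge0.
have -> : a ^+ 4 - b ^+ 4 - 4%:R * b ^+ 3 * (a - b)
        = (a - b) ^+ 2 * ((a + b) ^+ 2 + 2%:R * b ^+ 2) by ring.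
by rewrite mulr_ge0 ?sqr_ge0 // addr_ge0 ?sqr_ge0 // mulr_ge0 ?sqr_ge0.
Qed.

Lemma mulmx_col_norm_le (R : realDomainType) n (B : 'M[R]_n) (x : 'cV[R]_n) M i :
  (forall j, `|x j 0| <= M) -> `|(B *m x) i 0| <= (\sum_j `|B i j|) * M.
Proof.
move=> xM; rewrite mxE mulr_suml; apply: le_trans (ler_norm_sum _ _ _) _.
by apply: ler_sum => j _; rewrite normrM ler_wpM2l.
Qed.

Lemma qform_le (R : realDomainType) n (B : 'M[R]_n) (x : 'cV[R]_n) M :
  (forall i, `|x i 0| <= M) -> qform B x <= (\sum_i \sum_j `|B i j|) * M ^+ 2.
Proof.
move=> xM; rewrite /qform /dotc mulr_suml; apply: ler_sum => i _.
have M_ge0 : 0 <= M := le_trans (normr_ge0 _) (xM i).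
apply: le_trans (ler_norm _) _; rewrite normrM.
rewrite [X in _ <= X](_ : _ = M * ((\sum_j `|B i j|) * M)); last by rewrite expr2; ring.
by rewrite ler_pM ?normr_ge0 ?mulmx_col_norm_le.
Qed.

Lemma norm2_le_entries (R : realType) n (v : 'cV[R]_n) M :
  (forall i, `|v i 0| <= M) -> norm2 v <= Num.sqrt (n%:R * M ^+ 2).
Proof.
move=> vM; rewrite ler_sqrt; last by rewrite mulr_ge0 ?ler0n ?sqr_ge0.
have -> : n%:R * M ^+ 2 = \sum_(i < n) M ^+ 2 by rewrite sumr_const card_ord mulr_natl.
apply: ler_sum => i _.
have M_ge0 : 0 <= M := le_trans (normr_ge0 _) (vM i).
by rewrite -real_normK ?num_real // ler_pXn2r ?nnegrE ?normr_ge0 ?vM.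
Qed.

Lemma cvg_norm2_0 (R : realType) n (u : nat -> 'cV[R]_n) :
  (fun k => dotc (u k) (u k)) @ \oo --> 0 -> (fun k => norm2 (u k)) @ \oo --> 0.
Proof.
have -> : (fun k => norm2 (u k)) = Num.sqrt \o (fun k => dotc (u k) (u k)).
  by apply/funext => k; rewrite /= norm2_dotc.
by move=> dotc_cvg0; rewrite -sqrtr0; apply: cvg_comp dotc_cvg0 (@sqrt_continuous R 0).
Qed.

Section CoerciveQuadraticForm.
Variables (R : realType) (n : nat).

Lemma qform_trmx_continuous (B : 'M[R]_n) :
  continuous (fun u : 'rV[R]_n => qform B u^T).
Proof.
have -> : (fun u : 'rV[R]_n => qform B u^T) =
          (fun u => \sum_i \sum_j u 0 i * B i j * u 0 j).
  apply/funext => u; apply: eq_bigr => i _; rewrite !mxE mulr_sumr.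
  by apply: eq_bigr => j _; rewrite !mxE mulrA.
apply: continuous_big => [|i _]; first exact: add_continuous.
apply: continuous_big => [|j _]; first exact: add_continuous.
move=> u; apply: (continuousM (s := fun u : 'rV[R]_n => u 0 i * B i j)).
  apply: (continuousM (t := fun=> B i j)); first exact: coord_continuous.
  exact: cst_continuous.
exact: coord_continuous.
Qed.

Lemma unit_sphere_compact : compact [set u : 'rV[R]_n | dotc u^T u^T = 1].
Proof.
have sphere_closed : closed [set u : 'rV[R]_n | dotc u^T u^T = 1].
  rewrite (_ : [set u | _] = (fun u => qform 1%:M u^T) @^-1` [set 1]).
    apply: preimage_closed; last exact: closed_eq.
    by move=> u _; exact: qform_trmx_continuous.
  by apply/seteqP; split => u /=; rewrite qform1.
have cube := @rV_compact R n (fun=> `[-1, 1]%classic) (fun=> @segment_compact R (-1) 1).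
apply: (subclosed_compact sphere_closed cube).
move=> u u1 i /=; rewrite in_itv /= -ler_norml.
have : u^T i 0 * u^T i 0 <= 1.
  rewrite -u1 /dotc; apply: (@ler_sum_term R _ (fun k => u^T k 0 * u^T k 0)) => k.
  by rewrite -expr2 sqr_ge0.
by rewrite mxE -expr2 -real_normK ?num_real // expr_le1 ?normr_ge0.
Qed.

Lemma qform_min_on_sphere (A : 'M[R]_n) : (0 < n)%N ->
  exists2 c : 'cV[R]_n, dotc c c = 1 &
    forall u, dotc u u = 1 -> qform A c <= qform A u.
Proof.
move=> n_gt0.
have sphere_neq0 : [set u : 'rV[R]_n | dotc u^T u^T = 1] !=set0.
  by exists (delta_mx 0 (Ordinal n_gt0)); rewrite /= trmx_delta dotc_delta mxE !eqxx.
have [c c1 cmin] := EVT_min_rV sphere_neq0 unit_sphere_compact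
  (continuous_subspaceT (qform_trmx_continuous (B := A))).
exists c^T; first by move: c1; rewrite inE.
by move=> u u1; rewrite -[u]trmxK; apply: cmin; rewrite inE /= trmxK.
Qed.

Variable A : 'M[R]_n.

Lemma sphere_min_ler_qform c :
  (forall u, dotc u u = 1 -> qform A c <= qform A u) ->
  forall x, qform A c * dotc x x <= qform A x.
Proof.
move=> cmin x; have := dotc_ge0 x; rewrite le0r => /orP[/eqP/dotc_eq0->|e_gt0].
  by rewrite /qform !dotc0l mulr0.
pose s := Num.sqrt (dotc x x)^-1.
have s2 : s ^+ 2 = (dotc x x)^-1 by rewrite sqr_sqrtr // invr_ge0 ltW.
have := cmin (s *: x); rewrite -!qform1 !qformZ s2 !qform1 mulVf ?gt_eqF //.
by move/(_ erefl); rewrite ler_pdivlMl // mulrC.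
Qed.

Hypothesis symA : A^T = A.

Lemma qform_min_eigenvector c : dotc c c = 1 ->
  (forall x, qform A c * dotc x x <= qform A x) -> A *m c = qform A c *: c.
Proof.
move=> c1 cmin; set m := qform A c.
have first_variation v : dotc v (A *m c) = m * dotc v c.
  suff /eqP : 2%:R * (dotc v (A *m c) - m * dotc v c) = 0.
    by rewrite mulf_eq0 pnatr_eq0 subr_eq0 => /eqP.
  apply: (quadratic_ge0_linear_coef_eq0 (d := qform A v - m * dotc v v)) => t.
  have := cmin (c + t *: v).
  rewrite qformD // -!qform1 qformD ?trmx1 // !qformZ !qform1 c1 mul1mx !dotcZl.
  rewrite -/m; nra.
apply/matrixP => j i; rewrite (ord1 i) -dotc_delta first_variation dotc_delta.
by rewrite mxE.
Qed.

Lemma eigenvalue_col a (c : 'cV[R]_n) : c != 0 -> A *m c = a *: c -> eigenvalue A a.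
Proof.
move=> c_neq0 Ac; apply/eigenvalueP; exists c^T; last by rewrite trmx_eq0.
by rewrite -[in LHS]symA -trmx_mul Ac linearZ.
Qed.

Lemma qform_coercive : (forall a, eigenvalue A a -> 0 < a) ->
  exists2 m, 0 < m & forall x, m * dotc x x <= qform A x.
Proof.
move=> eig_pos; have [n_eq0|n_gt0] := posnP n.
  exists 1 => // x; rewrite /qform /dotc !big1 ?mulr0 // => -[i i_lt];
    by exfalso; rewrite n_eq0 in i_lt.
have [c c1 cmin] := qform_min_on_sphere A n_gt0.
have coercive := sphere_min_ler_qform cmin.
exists (qform A c) => //; apply/eig_pos/(@eigenvalue_col _ c).
  by apply: contra_eq_neq c1 => ->; rewrite dotc0l eq_sym oner_neq0.
exact: qform_min_eigenvector.
Qed.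

End CoerciveQuadraticForm.

Lemma cvg_telescope0 (R : realType) (u h : R ^nat) (b : R) :
  (forall k, 0 <= u k <= h k - h k.+1) -> (forall k, b <= h k) -> u @ \oo --> 0.
Proof.
move=> uh hb.
have h_noninc : nonincreasing_seq h.
  apply/nonincreasing_seqP => k; have /andP[u_ge0 u_le] := uh k.
  by rewrite -subr_ge0 (le_trans u_ge0 u_le).
have h_cvg : cvgn h by apply: nonincreasing_is_cvgn => //; exists b => _ [k _ <-].
have dh_cvg0 : (fun k => h k - h k.+1) @ \oo --> 0.
  by rewrite -(subrr (limn h)); apply: cvgB => //; rewrite (cvg_shiftS h).
by apply: (squeeze_cvgr _ (cvg_cst 0) dh_cvg0); near=> k; exact: uh.
Unshelve. all: by end_near. Qed.

(* [energy (J + alpha%:M) beta] is the paper's H = f - g. *)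
Definition energy (R : fieldType) n (A : 'M[R]_n) (beta : R) (x : 'cV[R]_n) : R :=
  beta / 4%:R * \sum_i x i 0 ^+ 4 - qform A x / 2%:R.

Lemma energy_lbound (R : realFieldType) n (A : 'M[R]_n) (beta : R) (x : 'cV[R]_n) M :
  0 <= beta ->
  (forall i, `|x i 0| <= M) ->
  - ((\sum_i \sum_j `|A i j|) * M ^+ 2) / 2%:R <= energy A beta x.
Proof.
move=> beta_ge0 xM; have := qform_le A xM.
have : 0 <= beta / 4%:R * \sum_i x i 0 ^+ 4.
  by rewrite mulr_ge0 ?divr_ge0 ?sumr_ge0 // => i _; rewrite exprn_even_ge0.
rewrite /energy; lra.
Qed.

Section DOCH.
Variables (R : realType) (n : nat) (J : 'M[R]_n) (alpha beta : R).
Hypothesis beta_gt0 : 0 < beta.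
Local Notation A := (J + alpha%:M).
Local Notation T := (doch_step J alpha beta).

Lemma mulmx_doch_step x i : (A *m x) i 0 = beta * T x i 0 ^+ 3.
Proof. by rewrite /doch_step [in RHS]mxE cbrtK mulrA mulfV ?mul1r // gt_eqF. Qed.

Lemma energy_descent x : A^T = A ->
  qform A (T x - x) / 2%:R <= energy A beta x - energy A beta (T x).
Proof.
move=> symA; set y := T x.
have tangent : dotc (x - y) (A *m x) <=
    beta / 4%:R * \sum_i x i 0 ^+ 4 - beta / 4%:R * \sum_i y i 0 ^+ 4.
  rewrite -mulrBr -sumrB mulr_sumr; apply: ler_sum => i _.
  rewrite mulmx_doch_step -/y [(x - y) i 0]mxE [(- y) i 0]mxE.
  rewrite (_ : (x i 0 - y i 0) * (beta * y i 0 ^+ 3) =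
      beta / 4%:R * (4%:R * y i 0 ^+ 3 * (x i 0 - y i 0))); last by field.
  by rewrite ler_pM2l ?divr_gt0 // quartic_tangent.
have := qformD x (y - x) symA; rewrite [x + _]addrC subrK -opprB dotcNl.
rewrite /energy; lra.
Qed.

Lemma doch_step_entries_le (x : 'cV[R]_n) M : 1 <= M ->
  (\sum_i \sum_j `|A i j|) / beta <= M ->
  (forall j, `|x j 0| <= M) -> forall i, `|T x i 0| <= M.
Proof.
move=> M_ge1 SM xM i; have M_gt0 : 0 < M by lra.
rewrite mxE; apply: ler_norm_cbrt; first exact: ltW.
set S := \sum_i \sum_j _ in SM.
have row_le : \sum_j `|A i j| <= S.
  by apply: (@ler_sum_term R _ (fun i => \sum_j `|A i j|)) => k; rewrite sumr_ge0.
have Ax_le : `|(A *m x) i 0| <= S * M.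
  exact: le_trans (mulmx_col_norm_le A i xM) (ler_wpM2r (ltW M_gt0) row_le).
have beta_inv_ge0 : 0 <= beta^-1 by rewrite invr_ge0 ltW.
rewrite normrM ger0_norm //; apply: le_trans (ler_wpM2l beta_inv_ge0 Ax_le) _.
by rewrite mulrA [_ * S]mulrC exprSr ler_pM2r // (le_trans SM) // expr2 ler_peMl // ltW.
Qed.

Lemma doch_bounded (x0 : 'cV[R]_n) :
  exists M, forall k i, `|doch J alpha beta x0 k i 0| <= M.
Proof.
pose S : R := \sum_i \sum_j `|A i j|.
pose M : R := 1 + S / beta + \sum_i `|x0 i 0|.
have S_ge0 : 0 <= S by apply: sumr_ge0 => i _; apply: sumr_ge0 => j _; exact: normr_ge0.
have SB_ge0 : 0 <= S / beta by rewrite divr_ge0 // ltW.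
have x0_ge0 : 0 <= \sum_i `|x0 i 0| by apply: sumr_ge0 => i _; exact: normr_ge0.
exists M.
elim=> [|k IHk] i; last by apply: doch_step_entries_le => //; rewrite -/S /M; lra.
apply: le_trans (@ler_sum_term R _ (fun i => `|x0 i 0|) i (fun _ => normr_ge0 _)) _.
by rewrite /M; lra.
Qed.

Lemma doch_steps_sqr_cvg0 (x0 : 'cV[R]_n) :
  A^T = A -> (forall a, eigenvalue A a -> 0 < a) ->
  (fun k => dotc (doch J alpha beta x0 k.+1 - doch J alpha beta x0 k)
                 (doch J alpha beta x0 k.+1 - doch J alpha beta x0 k)) @ \oo --> 0.
Proof.
move=> symA eig_pos.
have [m m_gt0 coercive] := qform_coercive symA eig_pos.
have [M bounded] := doch_bounded x0.
set x := doch J alpha beta x0.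
apply: (@cvg_telescope0 _ _ (fun k => 2%:R / m * energy A beta (x k))
  (2%:R / m * (- ((\sum_i \sum_j `|A i j|) * M ^+ 2) / 2%:R))) => k.
  rewrite dotc_ge0 /= -mulrBr mulrAC ler_pdivlMr //.
  change (x k.+1) with (doch_step J alpha beta (x k)).
  have := energy_descent (x k) symA.
  have := coercive (doch_step J alpha beta (x k) - x k); lra.
by rewrite ler_pM2l ?divr_gt0 //; apply: energy_lbound (ltW beta_gt0) (bounded k).
Qed.

End DOCH.

Theorem propositionS7 (R : realType) (n : nat) (J : 'M[R]_n) (alpha beta : R)
  (x0 : 'cV[R]_n) :
  J^T = J ->
  (forall i, J i i = 0) ->
  0 < alpha -> 0 < beta ->
  (* lambda_min (J + alpha I) > 0 : every eigenvalue of J + alpha I is positive *)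
  (forall a : R, eigenvalue (J + alpha%:M) a -> 0 < a) ->
  (exists M : R, forall k, norm2 (doch J alpha beta x0 k) <= M) /\
  ((fun k => norm2 (doch J alpha beta x0 k.+1 - doch J alpha beta x0 k))
     @ \oo --> (0 : R)).
Proof.
move=> symJ _ _ beta_gt0 eig_pos.
have symA : (J + alpha%:M)^T = J + alpha%:M by rewrite linearD /= symJ tr_scalar_mx.
have [M bounded] := doch_bounded J alpha beta_gt0 x0.
split; first by exists (Num.sqrt (n%:R * M ^+ 2)) => k; apply: norm2_le_entries.
exact: cvg_norm2_0 (doch_steps_sqr_cvg0 beta_gt0 x0 symA eig_pos).
Qed.
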